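(* Let $Q$ be a Foulis quantale. For $u\in Q$ let $\sigma_u\colon[Q]\to[Q]$ be the Sasaki action $\sigma_u(k)=(u\cdot k)^{\perp\perp}$. Then $\sigma_u\in\mathrm{Lin}([Q])$ for every $u$, and the map $h\colon Q\to\mathrm{Lin}([Q])$, $h(u)=\sigma_u$, is a homomorphism of Foulis quantales, where $\mathrm{Lin}([Q])$ carries the Foulis quantale structure given by composition, pointwise joins, identity unit, involution $f\mapsto f^\star$, and $[f]=\pi_{f^\star(1)^\perp}$. In particular $h(u^* )=h(u)^\star$ and $h(u^\perp)=h(u)^\perp$ for all $u\in Q$.
   Context: A quantale is a complete lattice $Q$ (join $\bigsqcup$) with associative multiplication distributing over arbitrary joins on both sides; unital if it has a two-sided unit $e$; involutive if it has a join-preserving semigroup involution $*$. A Foulis quantale is a unital involutive quantale $Q$ with an endomap $[-]\colon Q\to Q$ such that: (a) $[s]\cdot[s]=[s]=[s]^*$; (b) $[e]=0$; (c) $s\cdot x=0$ iff $x=[s]\cdot y$ for some $y\in Q$. For $t\in Q$ put $t^\perp=[t^*]$. The set $[Q]=\{[t]\mid t\in Q\}$ is a complete orthomodular lattice with order $k_1\le k_2$ iff $k_1=k_2\cdot k_1$, top $[0]$, orthocomplement $k^\perp=[k]$, joins $\bigvee S=[[\bigsqcup S]]$. For a complete orthomodular lattice $X$, write $x\perp y$ iff $x\le y^\perp$; a map $f\colon X\to X$ is linear if there is $g$ with $f(x)\perp y\iff x\perp g(y)$ for all $x,y$ (such $g$ is unique, denoted $f^\star$); $\mathrm{Lin}(X)$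 is the set of linear maps; for $a\in X$ the Sasaki projection is $\pi_a(y)=a\wedge(a^\perp\vee y)$. A homomorphism of Foulis quantales is a map preserving arbitrary joins, binary multiplication, unit, involution, and $(-)^\perp$. *)

Record FoulisQuantale := {
  fq_carrier :> Type;
  fq_le : fq_carrier -> fq_carrier -> Prop;
  fq_bigjoin : (fq_carrier -> Prop) -> fq_carrier;
  fq_mul : fq_carrier -> fq_carrier -> fq_carrier;
  fq_e : fq_carrier;
  fq_inv : fq_carrier -> fq_carrier;
  fq_br : fq_carrier -> fq_carrier;
  fq_le_refl : forall x, fq_le x x;
  fq_le_trans : forall x y z, fq_le x y -> fq_le y z -> fq_le x z;
  fq_le_antisym : forall x y, fq_le x y -> fq_le y x -> x = y;
  fq_bigjoin_ub : forall (S : fq_carrier -> Prop) x, S x -> fq_le x (fq_bigjoin S);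
  fq_bigjoin_least : forall (S : fq_carrier -> Prop) z,
      (forall x, S x -> fq_le x z) -> fq_le (fq_bigjoin S) z;
  fq_mulA : forall x y z, fq_mul x (fq_mul y z) = fq_mul (fq_mul x y) z;
  fq_mul_joinr : forall a (S : fq_carrier -> Prop),
      fq_mul a (fq_bigjoin S) = fq_bigjoin (fun y => exists x, S x /\ y = fq_mul a x);
  fq_mul_joinl : forall a (S : fq_carrier -> Prop),
      fq_mul (fq_bigjoin S) a = fq_bigjoin (fun y => exists x, S x /\ y = fq_mul x a);
  fq_mul1l : forall x, fq_mul fq_e x = x;
  fq_mul1r : forall x, fq_mul x fq_e = x;
  fq_invK : forall x, fq_inv (fq_inv x) = x;
  fq_invM : forall x y, fq_inv (fq_mul x y) = fq_mul (fq_inv y) (fq_inv x);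
  fq_inv_join : forall (S : fq_carrier -> Prop),
      fq_inv (fq_bigjoin S) = fq_bigjoin (fun y => exists x, S x /\ y = fq_inv x);
  fq_br_idem : forall s, fq_mul (fq_br s) (fq_br s) = fq_br s;
  fq_br_sa : forall s, fq_inv (fq_br s) = fq_br s;
  fq_br_e : fq_br fq_e = fq_bigjoin (fun _ => False);
  fq_br_ann : forall s x, fq_mul s x = fq_bigjoin (fun _ => False) <->
                          exists y, x = fq_mul (fq_br s) y
}.

Arguments fq_le {_}. Arguments fq_bigjoin {_}. Arguments fq_mul {_}.
Arguments fq_e {_}. Arguments fq_inv {_}. Arguments fq_br {_}.

Section FQ.
Variable Q : FoulisQuantale.

Definition fq_zero : Q := fq_bigjoin (fun _ => False).

Definition fq_perp (t : Q) : Q := fq_br (fq_inv t).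

(* The set [Q] = { [t] | t in Q } *)
Definition inK (k : Q) : Prop := exists t, k = fq_br t.
Definition K := { k : Q | inK k }.

Definition mkK (t : Q) : K := exist inK (fq_br t) (ex_intro _ t eq_refl).

Definition leK (k1 k2 : K) : Prop := proj1_sig k1 = fq_mul (proj1_sig k2) (proj1_sig k1).
Definition perpK (k : K) : K := mkK (proj1_sig k).
Definition topK : K := mkK fq_zero.
Definition bigjoinK (S : K -> Prop) : K :=
  mkK (fq_br (fq_bigjoin (fun x => exists k, S k /\ x = proj1_sig k))).
Definition joinK (a b : K) : K := bigjoinK (fun k => k = a \/ k = b).
Definition meetK (a b : K) : K := perpK (joinK (perpK a) (perpK b)).

Definition orthK (x y : K) : Prop := leK x (perpK y).

Definition is_adjoint (f g : K -> K) : Prop :=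
  forall x y, orthK (f x) y <-> orthK x (g y).
Definition linearK (f : K -> K) : Prop := exists g, is_adjoint f g.

Definition sasaki_proj (a : K) (y : K) : K := meetK a (joinK (perpK a) y).

Definition sasaki_action (u : Q) (k : K) : K :=
  mkK (fq_inv (fq_perp (fq_mul u (proj1_sig k)))).

End FQ.

Arguments fq_zero {_}. Arguments fq_perp {_}. Arguments leK {_}.
Arguments perpK {_}. Arguments topK {_}. Arguments bigjoinK {_}.
Arguments joinK {_}. Arguments meetK {_}. Arguments orthK {_}.
Arguments is_adjoint {_}. Arguments linearK {_}. Arguments sasaki_proj {_}.
Arguments sasaki_action {_}.

From Stdlib Require Import Setoid.

(* Everything is governed by left annihilators. The map x |-> x^{perp perp} = [[x^*]]
   lands in [Q], and y x = 0 iff y x^{perp perp} = 0, while an element of [Q] is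
   determined by the elements of [Q] annihilating it. Hence sigma_u(k) is "the"
   element of [Q] with the same annihilators as u k, which gives preservation of
   products and joins at once. Adjointness of sigma_u and sigma_{u^*} is the
   symmetry y (u k) = 0 <-> k (u^* y) = 0 for self-adjoint y, k; adjoints are
   unique, so the double adjoint of sigma_u is sigma_u and [h(u)] is the Sasaki
   projection onto sigma_u(1)^perp = u^perp; finally pi_a coincides with sigma_a
   on [Q], which gives h(u^perp) = [h(u)]. *)

Section FoulisQuantaleTheory.
Variable Q : FoulisQuantale.
Local Notation mul := (@fq_mul Q).
Local Notation inv := (@fq_inv Q).
Local Notation br := (@fq_br Q).
Local Notation zero := (@fq_zero Q).

Definition biperp (x : Q) : Q := fq_perp (fq_perp x).
Definition join2 (a b : Q) : Q := fq_bigjoin (fun z => z = a \/ z = b).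

Lemma zero_le x : fq_le zero x.
Proof. apply fq_bigjoin_least; intros _ []. Qed.

Lemma bigjoin_eq0 (T : Q -> Prop) : fq_bigjoin T = zero <-> forall x, T x -> x = zero.
Proof.
split.
- intros H x Tx. apply fq_le_antisym; [|apply zero_le].
  rewrite <- H. now apply fq_bigjoin_ub.
- intros H. apply fq_le_antisym; [|apply zero_le].
  apply fq_bigjoin_least. intros x Tx. rewrite (H x Tx). apply fq_le_refl.
Qed.

Lemma bigjoin_ext (T T' : Q -> Prop) :
  (forall x, T x <-> T' x) -> fq_bigjoin T = fq_bigjoin T'.
Proof.
intros H. apply fq_le_antisym; apply fq_bigjoin_least;
  intros x Tx; apply fq_bigjoin_ub, H, Tx.
Qed.

Lemma bigjoin_sa (T : Q -> Prop) :
  (forall x, T x -> inv x = x) -> inv (fq_bigjoin T) = fq_bigjoin T.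
Proof.
intros H. rewrite fq_inv_join. apply bigjoin_ext. intros z; split.
- intros [x [Tx ->]]. now rewrite H.
- intros Tz. exists z. now rewrite H.
Qed.

Lemma mul_bigjoinl_eq0 (T : Q -> Prop) x :
  mul (fq_bigjoin T) x = zero <-> forall y, T y -> mul y x = zero.
Proof.
rewrite fq_mul_joinl, bigjoin_eq0. split.
- intros H y Ty. apply H. eauto.
- intros H z [y [Ty ->]]. auto.
Qed.

Lemma mul_bigjoinr_eq0 y (T : Q -> Prop) :
  mul y (fq_bigjoin T) = zero <-> forall x, T x -> mul y x = zero.
Proof.
rewrite fq_mul_joinr, bigjoin_eq0. split.
- intros H x Tx. apply H. eauto.
- intros H z [x [Tx ->]]. auto.
Qed.

Lemma mul_join2_eq0 a b x :
  mul (join2 a b) x = zero <-> mul a x = zero /\ mul b x = zero.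
Proof.
unfold join2. rewrite mul_bigjoinl_eq0. split.
- intros H. split; apply H; auto.
- intros [Ha Hb] y [-> | ->]; assumption.
Qed.

Lemma mul0x x : mul zero x = zero.
Proof. apply mul_bigjoinl_eq0. intros _ []. Qed.

Lemma mulx0 x : mul x zero = zero.
Proof. apply mul_bigjoinr_eq0. intros _ []. Qed.

Lemma inv0 : inv zero = zero.
Proof. unfold fq_zero at 1. now apply bigjoin_sa. Qed.

Lemma mul_eq0_inv a b : mul a b = zero <-> mul (inv b) (inv a) = zero.
Proof.
split; intros H.
- rewrite <- fq_invM, H. apply inv0.
- rewrite <- (fq_invK Q a), <- (fq_invK Q b), <- fq_invM, H. apply inv0.
Qed.

Lemma mul_eq0_sa_swap a b c : inv a = a -> inv c = c ->
  mul a (mul b c) = zero <-> mul c (mul (inv b) a) = zero.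
Proof. intros Ha Hc. rewrite mul_eq0_inv, !fq_invM, Ha, Hc, fq_mulA. reflexivity. Qed.

Lemma mul_fix_sa a b : inv a = a -> inv b = b -> mul a b = b -> mul b a = b.
Proof.
intros Ha Hb H. transitivity (inv (mul a b)).
- now rewrite fq_invM, Ha, Hb.
- now rewrite H.
Qed.

Lemma proj_eq a b : inv a = a -> inv b = b -> mul b a = a -> mul a b = b -> a = b.
Proof. intros Ha Hb Hba Hab. rewrite <- Hab. symmetry. now apply mul_fix_sa. Qed.

Lemma mul_br s : mul s (br s) = zero.
Proof. apply fq_br_ann. exists fq_e. now rewrite fq_mul1r. Qed.

Lemma br_fixP s x : mul (br s) x = x <-> mul s x = zero.
Proof.
split; intros H.
- rewrite <- H, fq_mulA, mul_br. apply mul0x.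
- destruct (proj1 (fq_br_ann Q s x) H) as [y ->]. now rewrite fq_mulA, fq_br_idem.
Qed.

Lemma mul_br_sa s : inv s = s -> mul (br s) s = zero.
Proof. intros Hs. rewrite mul_eq0_inv, Hs, fq_br_sa. apply mul_br. Qed.

Lemma mul_brbr_eq0 s x : mul (br s) x = x -> mul (inv x) (br (br s)) = zero.
Proof.
intros H. rewrite <- H at 1.
rewrite fq_invM, fq_br_sa, <- fq_mulA, mul_br. apply mulx0.
Qed.

Lemma br_br_br t : br (br (br t)) = br t.
Proof.
apply proj_eq; try apply fq_br_sa.
- apply br_fixP. rewrite <- (fq_invK Q t) at 1. apply mul_brbr_eq0, br_fixP.
  rewrite mul_eq0_inv, fq_br_sa, fq_invK. apply mul_br.
- apply br_fixP, mul_br_sa, fq_br_sa.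
Qed.

Lemma br_eq_ann s t :
  (forall l, inK Q l -> (mul l (br s) = zero <-> mul l (br t) = zero)) -> br s = br t.
Proof.
intros H.
assert (Hle : forall a b, (forall l, inK Q l -> mul l (br b) = zero -> mul l (br a) = zero) ->
                          mul (br b) (br a) = br a).
{ intros a b Hab. rewrite <- (br_br_br b). apply br_fixP, Hab.
  - exists (br b). reflexivity.
  - apply mul_br_sa, fq_br_sa. }
apply proj_eq; try apply fq_br_sa; apply Hle; intros l Hl; apply (H l Hl).
Qed.

Lemma biperpE x : biperp x = br (br (inv x)).
Proof. unfold biperp, fq_perp. now rewrite fq_br_sa. Qed.

Lemma biperp_sa x : inv (biperp x) = biperp x.
Proof. rewrite biperpE. apply fq_br_sa. Qed.

Lemma mul_biperp x : mul (biperp x) x = x.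
Proof.
rewrite biperpE. apply br_fixP.
rewrite mul_eq0_inv, fq_br_sa. apply mul_br.
Qed.

Lemma mul_biperp_eq0 y x : mul y (biperp x) = zero <-> mul y x = zero.
Proof.
split; intros H.
- rewrite <- (mul_biperp x), fq_mulA, H. apply mul0x.
- (* [y] fixes x, so [[y]] kills x^* and is fixed by [x^*]; hence [[y]] kills [[x^*]]. *)
  assert (Hx : mul (inv x) (br (br y)) = zero) by (apply mul_brbr_eq0, br_fixP, H).
  assert (Hyx : mul (br (br y)) (biperp x) = zero).
  { rewrite biperpE, <- (fq_br_sa Q (br y)).
    apply mul_brbr_eq0, br_fixP, Hx. }
  apply br_fixP. rewrite <- (br_br_br y). apply br_fixP, Hyx.
Qed.

Lemma biperp_eq_ann x x' :
  (forall y, mul y x = zero <-> mul y x' = zero) -> biperp x = biperp x'.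
Proof.
intros H. rewrite !biperpE. apply br_eq_ann. intros l _.
rewrite <- !biperpE, !mul_biperp_eq0. apply H.
Qed.

Lemma br_biperp u : br (biperp u) = fq_perp u.
Proof. rewrite biperpE. apply br_br_br. Qed.

Lemma br0 : br zero = fq_e.
Proof.
destruct (proj1 (fq_br_ann Q zero fq_e) (mul0x _)) as [y Hy].
rewrite <- (fq_mul1r Q (br zero)), Hy, fq_mulA, fq_br_idem. reflexivity.
Qed.

Lemma K_sa (k : K Q) : inv (proj1_sig k) = proj1_sig k.
Proof. destruct k as [k [t ->]]. apply fq_br_sa. Qed.

Lemma br_br_K (k : K Q) : br (br (proj1_sig k)) = proj1_sig k.
Proof. destruct k as [k [t ->]]. apply br_br_br. Qed.

Lemma biperp_K (k : K Q) : biperp (proj1_sig k) = proj1_sig k.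
Proof. rewrite biperpE, K_sa. apply br_br_K. Qed.

Lemma orthK_iff (x y : K Q) : orthK x y <-> mul (proj1_sig y) (proj1_sig x) = zero.
Proof. unfold orthK, leK. cbn. rewrite <- br_fixP. split; apply eq_sym. Qed.

Lemma orthK_sym (x y : K Q) : orthK x y <-> orthK y x.
Proof. rewrite !orthK_iff, mul_eq0_inv, !K_sa. reflexivity. Qed.

Lemma K_eq_orth (a b : K Q) :
  (forall x, orthK x a <-> orthK x b) -> proj1_sig a = proj1_sig b.
Proof.
intros H. destruct a as [a [s ->]], b as [b [t ->]]. cbn. apply br_eq_ann.
intros l [r ->]. specialize (H (mkK Q r)). rewrite !orthK_iff in H. cbn in H.
rewrite !(mul_eq0_inv (br r)), !fq_br_sa. exact H.
Qed.

Lemma is_adjoint_sym (f g : K Q -> K Q) : is_adjoint f g -> is_adjoint g f.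
Proof. intros H x y. rewrite orthK_sym, <- (H y x). apply orthK_sym. Qed.

Lemma is_adjoint_unique (f g g' : K Q -> K Q) :
  is_adjoint f g -> is_adjoint f g' -> forall k, proj1_sig (g k) = proj1_sig (g' k).
Proof. intros Hg Hg' k. apply K_eq_orth. intros x. now rewrite <- (Hg x k), <- (Hg' x k). Qed.

Lemma sasaki_actionE u k : proj1_sig (sasaki_action u k) = biperp (mul u (proj1_sig k)).
Proof. reflexivity. Qed.

Lemma sasaki_action_adjoint u : is_adjoint (sasaki_action u) (sasaki_action (inv u)).
Proof.
intros x y. rewrite !orthK_iff, !sasaki_actionE, mul_biperp_eq0.
rewrite (mul_eq0_inv (biperp _)), biperp_sa, K_sa, mul_biperp_eq0.
apply mul_eq0_sa_swap; apply K_sa.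
Qed.

Lemma adjoint_adjoint_sasaki_action u (g g' : K Q -> K Q) :
  is_adjoint (sasaki_action u) g -> is_adjoint g g' ->
  forall k, proj1_sig (g' k) = proj1_sig (sasaki_action u k).
Proof. intros Hg Hg'. apply (is_adjoint_unique g); [exact Hg' | now apply is_adjoint_sym]. Qed.

Lemma sasaki_action_mul u v k :
  proj1_sig (sasaki_action (mul u v) k) = proj1_sig (sasaki_action u (sasaki_action v k)).
Proof.
rewrite !sasaki_actionE. apply biperp_eq_ann. intros y.
rewrite (fq_mulA Q y u), mul_biperp_eq0, !fq_mulA. reflexivity.
Qed.

Lemma sasaki_action_unit (k : K Q) : proj1_sig (sasaki_action fq_e k) = proj1_sig k.
Proof. rewrite sasaki_actionE, fq_mul1l. apply biperp_K. Qed.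

Lemma sasaki_action_top (u : Q) : proj1_sig (sasaki_action u topK) = biperp u.
Proof. rewrite sasaki_actionE. cbn. now rewrite br0, fq_mul1r. Qed.

Lemma sasaki_action_bigjoin (S : Q -> Prop) k :
  proj1_sig (sasaki_action (fq_bigjoin S) k) =
  proj1_sig (bigjoinK (fun x => exists u, S u /\ x = sasaki_action u k)).
Proof.
set (J := fq_bigjoin (fun x => exists k',
            (exists u, S u /\ k' = sasaki_action u k) /\ x = proj1_sig k')).
transitivity (biperp J).
- apply biperp_eq_ann. intros y.
  unfold J. rewrite fq_mul_joinl, !mul_bigjoinr_eq0. split; intros H x Hx.
  + destruct Hx as [k' [[u [Su ->]] ->]].
    rewrite sasaki_actionE, mul_biperp_eq0. apply H. eauto.
  + destruct Hx as [u [Su ->]]. rewrite <- mul_biperp_eq0. apply H.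
    exists (sasaki_action u k). split; [eauto | reflexivity].
- unfold J. rewrite biperpE, bigjoin_sa; [reflexivity |].
  intros x [k' [_ ->]]. apply K_sa.
Qed.

Lemma joinK_val (x y : K Q) :
  proj1_sig (joinK x y) = br (br (join2 (proj1_sig x) (proj1_sig y))).
Proof.
cbn. do 2 f_equal. apply bigjoin_ext. intros z; split.
- intros [k [[-> | ->] ->]]; auto.
- intros [-> | ->]; eauto.
Qed.

Lemma sasaki_proj_join2 (a k : K Q) : proj1_sig (sasaki_proj a k) =
  br (join2 (br (proj1_sig a)) (br (join2 (br (proj1_sig a)) (proj1_sig k)))).
Proof.
unfold sasaki_proj, meetK. cbn [perpK mkK proj1_sig].
rewrite joinK_val, br_br_br. cbn [perpK mkK proj1_sig].
rewrite joinK_val, br_br_br. reflexivity.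
Qed.

Section SasakiProjection.
Variables P k : Q.
Hypotheses (P_sa : inv P = P) (P_closed : br (br P) = P) (k_sa : inv k = k).

(* Read in [Q]: N = P /\ k^perp and B = P /\ N^perp = P /\ (P^perp \/ k) = pi_P(k). *)
Local Notation N := (br (join2 (br P) k)).
Local Notation B := (br (join2 (br P) N)).

Lemma mul_closed_fix x : mul (br P) x = zero -> mul P x = x.
Proof. intros H. rewrite <- P_closed at 1. now apply br_fixP. Qed.

Lemma mul_N_P : mul N P = N.
Proof.
apply mul_fix_sa; [exact P_sa | apply fq_br_sa |].
apply mul_closed_fix, (mul_join2_eq0 (br P) k), mul_br.
Qed.

Lemma mul_N_k : mul N k = zero.
Proof.
rewrite mul_eq0_inv, fq_br_sa, k_sa.
apply (mul_join2_eq0 (br P) k), mul_br.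
Qed.

Lemma mul_B_biperp : mul B (biperp (mul P k)) = biperp (mul P k).
Proof.
apply br_fixP, mul_join2_eq0.
split; rewrite mul_biperp_eq0, fq_mulA.
- rewrite mul_br_sa by exact P_sa. apply mul0x.
- rewrite mul_N_P. exact mul_N_k.
Qed.

Lemma mul_biperp_B : mul (biperp (mul P k)) B = B.
Proof.
destruct (proj1 (mul_join2_eq0 (br P) N B) (mul_br _)) as [HPB HNB].
assert (HBP : mul B P = B).
{ apply mul_fix_sa; [exact P_sa | apply fq_br_sa | now apply mul_closed_fix]. }
assert (HBN : mul B (br N) = B).
{ apply mul_fix_sa; [apply fq_br_sa | apply fq_br_sa | now apply br_fixP]. }
rewrite biperpE. set (q := br (inv (mul P k))).
assert (HPq : mul N (mul P q) = mul P q).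
{ apply br_fixP, mul_join2_eq0. rewrite !fq_mulA. split.
  - rewrite mul_br_sa by exact P_sa. apply mul0x.
  - assert (Hq : mul (inv (mul P k)) q = zero) by apply mul_br.
    rewrite fq_invM, k_sa, P_sa in Hq. exact Hq. }
assert (HNq : mul (br N) (mul P q) = zero).
{ rewrite <- HPq, fq_mulA, mul_br_sa by apply fq_br_sa. apply mul0x. }
apply br_fixP. rewrite mul_eq0_inv, fq_br_sa, (fq_br_sa Q _ : inv q = q).
rewrite <- HBP, <- HBN, <- !fq_mulA, HNq. apply mulx0.
Qed.

Lemma biperp_mul_closed : biperp (mul P k) = br (join2 (br P) (br (join2 (br P) k))).
Proof.
apply proj_eq; [apply biperp_sa | apply fq_br_sa | exact mul_B_biperp | exact mul_biperp_B].
Qed.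

End SasakiProjection.

Lemma sasaki_proj_biperp (a k : K Q) :
  proj1_sig (sasaki_proj a k) = biperp (mul (proj1_sig a) (proj1_sig k)).
Proof.
rewrite sasaki_proj_join2. symmetry.
apply biperp_mul_closed; [apply K_sa | apply br_br_K | apply K_sa].
Qed.

End FoulisQuantaleTheory.

Theorem mainTheorem8 (Q : FoulisQuantale) :
  (forall u : Q, linearK (sasaki_action u)) /\
  (forall (S : Q -> Prop) (k : K Q),
      proj1_sig (sasaki_action (fq_bigjoin S) k) =
      proj1_sig (bigjoinK (fun x => exists u, S u /\ x = sasaki_action u k))) /\
  (forall (u v : Q) (k : K Q),
      proj1_sig (sasaki_action (fq_mul u v) k) =
      proj1_sig (sasaki_action u (sasaki_action v k))) /\
  (forall k : K Q, proj1_sig (sasaki_action fq_e k) = proj1_sig k) /\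
  (forall (u : Q) (g : K Q -> K Q), is_adjoint (sasaki_action u) g ->
      forall k, proj1_sig (sasaki_action (fq_inv u) k) = proj1_sig (g k)) /\
  (forall (u : Q) (g g' : K Q -> K Q),
      is_adjoint (sasaki_action u) g -> is_adjoint g g' ->
      forall k, proj1_sig (sasaki_action (fq_perp u) k) =
              proj1_sig (sasaki_proj (perpK (g' topK)) k)).
Proof.
split; [intros u; exists (sasaki_action (fq_inv u)); apply sasaki_action_adjoint |].
split; [exact (sasaki_action_bigjoin Q) |].
split; [exact (sasaki_action_mul Q) |].
split; [exact (sasaki_action_unit Q) |].
split.
- intros u g Hg.
  apply (is_adjoint_unique Q (sasaki_action u)); [apply sasaki_action_adjoint | exact Hg].
- intros u g g' Hg Hg' k.
  rewrite sasaki_proj_biperp. cbn [perpK mkK proj1_sig].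
  rewrite (adjoint_adjoint_sasaki_action Q u g g' Hg Hg'), sasaki_action_top, br_biperp.
  reflexivity.
Qed.
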